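(* Let $(\lambda_m)_{m\in\mathbb{N}_0}$ be real numbers, $\gamma>0$, $f\in C^\infty[x_0,x_0+\gamma]$ complex-valued, and $0<2\delta<\gamma$. Then for every $m\in\mathbb{N}_0$ and all $x\in[x_0,x_0+\delta]$, $$|D^{(2m+1)}f(x)|\le 2\max\left\{\tfrac2\delta,\delta\right\}e^{(|\lambda_{2m}|+|\lambda_{2m+1}|)\delta}\left(\max_{t\in[x_0,x_0+2\delta]}|D^{(2m)}f(t)|+\max_{t\in[x_0,x_0+2\delta]}|D^{(2m+2)}f(t)|\right).$$
   Context: $D^{(n)}f=(\frac{d}{dt}-\lambda_0)\cdots(\frac{d}{dt}-\lambda_{n-1})f$ with $D^{(0)}f=f$ (one-sided derivatives at endpoints). *)

From Stdlib Require Import Reals.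
Open Scope R_scope.

(* A complex-valued function is represented by its real and imaginary parts
   fr, fi : R -> R; the modulus of (u + i v) is sqrt(u^2 + v^2). *)
Definition cmod (u v : R) : R := sqrt (u ^ 2 + v ^ 2).

(* Derivative of g at x (a <= x <= b) relative to the interval [a,b]:
   one-sided at the endpoints, two-sided in the interior. *)
Definition deriv_in (a b : R) (g : R -> R) (x l : R) : Prop :=
  forall eps : R, 0 < eps -> exists del : R, 0 < del /\
    forall y : R, a <= y <= b -> y <> x -> Rabs (y - x) < del ->
      Rabs ((g y - g x) / (y - x) - l) < eps.

Definition smooth_on (a b : R) (g : R -> R) : Prop :=
  exists F : nat -> R -> R,
    (forall x, a <= x <= b -> F 0%nat x = g x) /\
    (forall (k : nat) (x : R), a <= x <= b -> deriv_in a b (F k) x (F (S k) x)).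

(* Dop a b lam n g h  :<->  h = D^{(n)} g on [a,b], where
   D^{(n)} = (d/dt - lam 0) ... (d/dt - lam (n-1)), D^{(0)} = id, i.e.
   D^{(n+1)}_lam g = (d/dt - lam 0) (D^{(n)}_{lam(.+1)} g).
   Since the lam are real, for complex g = gr + i gi one has
   D^{(n)} g = D^{(n)} gr + i D^{(n)} gi. *)
Inductive Dop (a b : R) : (nat -> R) -> nat -> (R -> R) -> (R -> R) -> Prop :=
| Dop_0 : forall (lam : nat -> R) (g h : R -> R),
    (forall x, a <= x <= b -> h x = g x) -> Dop a b lam 0%nat g h
| Dop_S : forall (lam : nat -> R) (n : nat) (g h k : R -> R),
    Dop a b (fun j => lam (S j)) n g h ->
    (forall x, a <= x <= b -> deriv_in a b h x (k x + lam 0%nat * h x)) ->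
    Dop a b lam (S n) g k.

Definition cmod_image (c d : R) (hr hi : R -> R) : R -> Prop :=
  fun y => exists t, c <= t <= d /\ y = cmod (hr t) (hi t).

(* Write q0, q1, q2 for D^{(2m)} f, D^{(2m+1)} f, D^{(2m+2)} f, mu = lam (2m)
   and nu = lam (2m+1).  Peeling off the last factor of the operator gives
   q0' = q1 + mu q0 and q1' = q2 + nu q1 (lemma [Dop_deriv_succ]).  For a
   relation q' = p + mu q the function exp(-mu s) q(s) has derivative
   exp(-mu s) p(s), so the mean value theorem yields a weighted mean value
   identity ([weighted_mvt]), from which we get a bound on p at some point of
   an interval ([slope_bound]) and a transport of bounds from one end of an
   interval to the other ([transport_bound]).  On [x, x+d] the first gives a
   point xi with |q1 xi| <= 2 e^{|mu|d} M0 / d, the second carries it back to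
   x ([real_core]).  The complex case reduces to the real one by projecting
   onto the direction of D^{(2m+1)} f(x) ([complex_core]); the stated
   constant then follows from 2 M0/d + d M2 <= max(2/d, d) (M0 + M2).

   Derivatives are taken relative to a closed interval, so to use the mean
   value theorem on R we first extend functions constantly outside the
   interval ([clamp]). *)

From Stdlib Require Import Reals Lra Lia.
From Coquelicot Require Import Coquelicot.
Open Scope R_scope.

Lemma deriv_in_cont A B g c l : deriv_in A B g c l -> forall eps, 0 < eps ->
  exists alp, 0 < alp /\
    forall y, A <= y <= B -> Rabs (y - c) < alp -> Rabs (g y - g c) < eps.
Proof.
  intros H eps Heps.
  destruct (H 1 ltac:(lra)) as [del [Hdel Hd]].
  set (L := Rabs l + 1).
  assert (HL : 0 < L) by (unfold L; pose proof (Rabs_pos l); lra).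
  exists (Rmin del (eps / L)); split.
  { apply Rmin_pos; [lra | apply Rdiv_lt_0_compat; lra]. }
  intros y Hy Hyc.
  destruct (Req_dec y c) as [->|Hne].
  { replace (g c - g c) with 0 by ring; rewrite Rabs_R0; lra. }
  assert (Hq := Hd y Hy Hne (Rlt_le_trans _ _ _ Hyc (Rmin_l _ _))).
  set (q := (g y - g c) / (y - c)) in *.
  assert (Hquot : g y - g c = q * (y - c)) by (unfold q; field; lra).
  assert (Hq_le : Rabs q <= L).
  { unfold L. replace q with ((q - l) + l) by ring.
    pose proof (Rabs_triang (q - l) l); lra. }
  assert (Hsmall : Rabs (y - c) < eps / L)
    by (eapply Rlt_le_trans; [exact Hyc | apply Rmin_r]).
  rewrite Hquot, Rabs_mult.
  apply Rle_lt_trans with (L * Rabs (y - c)).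
  { apply Rmult_le_compat_r; [apply Rabs_pos | exact Hq_le]. }
  replace eps with (L * (eps / L)) by (field; lra).
  apply Rmult_lt_compat_l; lra.
Qed.

(* On a nondegenerate interval the relative derivative is unique: from every
   point there are interval points at any small distance. *)
Lemma deriv_in_unique A B g x l1 l2 : A < B -> A <= x <= B ->
  deriv_in A B g x l1 -> deriv_in A B g x l2 -> l1 = l2.
Proof.
  intros HAB Hx H1 H2.
  destruct (Req_dec l1 l2) as [E|E]; [exact E|]. exfalso.
  set (eps := Rabs (l1 - l2) / 2).
  assert (Heps : 0 < eps).
  { unfold eps; assert (0 < Rabs (l1 - l2)) by (apply Rabs_pos_lt; lra); lra. }
  destruct (H1 eps Heps) as [d1 [Hd1 K1]].
  destruct (H2 eps Heps) as [d2 [Hd2 K2]].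
  set (h := Rmin (Rmin d1 d2) (B - A) / 2).
  assert (0 < Rmin (Rmin d1 d2) (B - A)) by (repeat apply Rmin_pos; lra).
  pose proof (Rmin_l (Rmin d1 d2) (B - A)); pose proof (Rmin_r (Rmin d1 d2) (B - A)).
  pose proof (Rmin_l d1 d2); pose proof (Rmin_r d1 d2).
  assert (Hy : exists y, A <= y <= B /\ y <> x /\ Rabs (y - x) = h).
  { destruct (Rle_dec (x + h) B).
    - exists (x + h); replace (x + h - x) with h by ring.
      rewrite Rabs_right; unfold h in *; repeat split; lra.
    - exists (x - h); replace (x - h - x) with (- h) by ring.
      rewrite Rabs_Ropp, Rabs_right; unfold h in *; repeat split; lra. }
  destruct Hy as [y [Hy [Hyx Hyh]]].
  assert (A1 := K1 y Hy Hyx ltac:(unfold h in *; lra)).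
  assert (A2 := K2 y Hy Hyx ltac:(unfold h in *; lra)).
  set (q := (g y - g x) / (y - x)) in *.
  assert (T := Rabs_triang (q - l2) (l1 - q)).
  replace (q - l2 + (l1 - q)) with (l1 - l2) in T by ring.
  rewrite Rabs_minus_sym in A1.
  unfold eps in *; lra.
Qed.

Lemma deriv_in_ext A B g h x l : A <= x <= B ->
  (forall t, A <= t <= B -> g t = h t) ->
  deriv_in A B g x l -> deriv_in A B h x l.
Proof.
  intros Hx E H eps Heps. destruct (H eps Heps) as [d [Hd K]].
  exists d; split; [lra|]. intros y Hy Hyx Hyd.
  rewrite <- (E y Hy), <- (E x Hx). apply K; assumption.
Qed.

Lemma deriv_in_lin A B g h x l1 l2 a b :
  deriv_in A B g x l1 -> deriv_in A B h x l2 ->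
  deriv_in A B (fun t => a * g t + b * h t) x (a * l1 + b * l2).
Proof.
  intros H1 H2 eps Heps.
  set (C := Rabs a + Rabs b + 1).
  assert (HC : 1 <= C) by (unfold C; pose proof (Rabs_pos a); pose proof (Rabs_pos b); lra).
  set (e := eps / (2 * C)).
  assert (He : 0 < e) by (unfold e; apply Rdiv_lt_0_compat; lra).
  destruct (H1 e He) as [d1 [Hd1 K1]].
  destruct (H2 e He) as [d2 [Hd2 K2]].
  exists (Rmin d1 d2); split; [apply Rmin_pos; lra|].
  intros y Hy Hyx Hyd.
  assert (A1 := K1 y Hy Hyx (Rlt_le_trans _ _ _ Hyd (Rmin_l _ _))).
  assert (A2 := K2 y Hy Hyx (Rlt_le_trans _ _ _ Hyd (Rmin_r _ _))).
  replace ((a * g y + b * h y - (a * g x + b * h x)) / (y - x) - (a * l1 + b * l2))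
    with (a * ((g y - g x) / (y - x) - l1) + b * ((h y - h x) / (y - x) - l2))
    by (field; lra).
  eapply Rle_lt_trans; [apply Rabs_triang|].
  rewrite !Rabs_mult.
  assert (Q1 : Rabs a * Rabs ((g y - g x) / (y - x) - l1) <= Rabs a * e)
    by (apply Rmult_le_compat_l; [apply Rabs_pos | lra]).
  assert (Q2 : Rabs b * Rabs ((h y - h x) / (y - x) - l2) <= Rabs b * e)
    by (apply Rmult_le_compat_l; [apply Rabs_pos | lra]).
  assert (Q3 : C * e = eps / 2) by (unfold e; field; lra).
  unfold C in Q3. lra.
Qed.

(* D^{(n+1)} = (d/dt - lam 0) D^{(n)}_{lam (.+1)}, with the first factor
   outermost; by induction the innermost factor can be peeled off as well:
   (D^{(n)} g)' = D^{(n+1)} g + lam n D^{(n)} g. *)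
Lemma Dop_deriv_succ A B : A < B -> forall n lam g h k,
  Dop A B lam n g h -> Dop A B lam (n + 1) g k ->
  forall x, A <= x <= B -> deriv_in A B h x (k x + lam n * h x).
Proof.
  intros HAB n; rewrite Nat.add_1_r.
  induction n as [|n IH]; intros lam g h k Hh Hk x Hx.
  - inversion Hh as [lam1 g1 h1 E1|]; subst.
    inversion Hk as [|lam2 n2 g2 h2 k2 Hd2 Hder2]; subst.
    inversion Hd2 as [lam3 g3 h3 E3|]; subst.
    assert (E : forall t, A <= t <= B -> h2 t = h t)
      by (intros t Ht; rewrite E1, E3; auto).
    rewrite <- (E x Hx).
    apply (deriv_in_ext A B h2 h); auto.
  - inversion Hh as [|lam1 n1 g1 h1 k1 Hd1 Hder1]; subst.
    inversion Hk as [|lam2 n2 g2 h2 k2 Hd2 Hder2]; subst.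
    assert (HI := IH _ _ _ _ Hd1 Hd2).
    (* h = D h1 - lam 0 h1 = h2 + (lam (n+1) - lam 0) h1 by uniqueness. *)
    assert (Eq : forall t, A <= t <= B ->
      h t = 1 * h2 t + (lam (S n) - lam 0%nat) * h1 t).
    { intros t Ht.
      assert (U := deriv_in_unique A B h1 t _ _ HAB Ht (Hder1 t Ht) (HI t Ht)).
      simpl in U. lra. }
    assert (D := deriv_in_lin A B h2 h1 x _ _ 1 (lam (S n) - lam 0%nat)
                   (Hder2 x Hx) (Hder1 x Hx)).
    apply (deriv_in_ext A B _ h x _ Hx (fun t Ht => eq_sym (Eq t Ht))) in D.
    replace (k x + lam (S n) * h x) with
      (1 * (k x + lam 0%nat * h2 x) + (lam (S n) - lam 0%nat) * (h x + lam 0%nat * h1 x));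
      [exact D | rewrite (Eq x Hx); ring].
Qed.

(* [clamp A B] retracts R onto [A, B]; composing with it extends a function
   on [A, B] to R, constantly outside the interval. *)
Definition clamp (A B t : R) : R := Rmax A (Rmin B t).

Lemma clamp_id A B t : A <= t <= B -> clamp A B t = t.
Proof. intros H; unfold clamp, Rmax, Rmin; repeat destruct Rle_dec; lra. Qed.

Lemma clamp_in A B t : A <= B -> A <= clamp A B t <= B.
Proof. intros H; unfold clamp, Rmax, Rmin; repeat destruct Rle_dec; lra. Qed.

Lemma clamp_lip A B y z : A <= B -> Rabs (clamp A B y - clamp A B z) <= Rabs (y - z).
Proof.
  intros H; unfold clamp, Rmax, Rmin; repeat destruct Rle_dec;
  unfold Rabs; repeat destruct Rcase_abs; lra.
Qed.

Lemma clamp_continuity A B g g' : A <= B ->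
  (forall t, A <= t <= B -> deriv_in A B g t (g' t)) ->
  forall c, continuity_pt (fun t => g (clamp A B t)) c.
Proof.
  intros HAB Hd c.
  unfold continuity_pt, continue_in, limit1_in, limit_in; simpl; unfold R_dist.
  intros eps Heps.
  assert (Hc : A <= clamp A B c <= B) by (apply clamp_in; lra).
  destruct (deriv_in_cont _ _ _ _ _ (Hd _ Hc) eps Heps) as [alp [Ha Hal]].
  exists alp; split; [lra|].
  intros x [_ Hx].
  apply Hal; [apply clamp_in; lra|].
  eapply Rle_lt_trans; [apply clamp_lip; lra | exact Hx].
Qed.

Lemma clamp_deriv A B g c l : A < c < B -> deriv_in A B g c l ->
  is_derive (fun t => g (clamp A B t)) c l.
Proof.
  intros Hc H. apply is_derive_Reals. intros eps Heps.
  destruct (H eps Heps) as [del [Hdel Hd]].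
  set (r := Rmin del (Rmin (c - A) (B - c))).
  assert (Hr : 0 < r) by (unfold r; repeat apply Rmin_pos; lra).
  pose proof (Rmin_l del (Rmin (c - A) (B - c))).
  pose proof (Rmin_r del (Rmin (c - A) (B - c))).
  pose proof (Rmin_l (c - A) (B - c)); pose proof (Rmin_r (c - A) (B - c)).
  exists (mkposreal r Hr); simpl. intros h Hh0 Hh.
  assert (Hh' : - r < h < r) by (revert Hh; unfold Rabs; destruct Rcase_abs; lra).
  unfold r in Hh, Hh'.
  rewrite (clamp_id A B (c + h)), (clamp_id A B c) by lra.
  replace h with ((c + h) - c) at 2 by ring.
  apply Hd; [lra | lra |]. replace (c + h - c) with h by ring. lra.
Qed.

Lemma weighted_deriv A B q p mu t : A < t < B -> deriv_in A B q t (p + mu * q t) ->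
  is_derive (fun s => exp (- mu * s) * q (clamp A B s)) t (exp (- mu * t) * p).
Proof.
  intros Ht Hq.
  assert (Hexp : is_derive (fun s => exp (- mu * s)) t (- mu * exp (- mu * t)))
    by (auto_derive; [trivial | ring]).
  assert (Hprod := is_derive_mult _ _ _ _ _ Hexp (clamp_deriv A B q t _ Ht Hq)
                     (fun a b => Rmult_comm a b)).
  replace (exp (- mu * t) * p) with
    (- mu * exp (- mu * t) * q (clamp A B t) + exp (- mu * t) * (p + mu * q t));
    [exact Hprod | rewrite clamp_id by lra; ring].
Qed.

(* Mean value theorem for exp(-mu s) q(s), rescaled by exp(mu s) for an
   arbitrary base point s. *)
Lemma weighted_mvt A B q p mu a b : A <= a <= b -> b <= B ->
  (forall t, A <= t <= B -> deriv_in A B q t (p t + mu * q t)) ->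
  exists c, a <= c <= b /\ forall s,
    exp (mu * (s - b)) * q b - exp (mu * (s - a)) * q a
      = exp (mu * (s - c)) * p c * (b - a).
Proof.
  intros Ha Hb Hd.
  destruct (MVT_gen (fun s => exp (- mu * s) * q (clamp A B s)) a b
              (fun s => exp (- mu * s) * p s)) as [c [Hc Hmvt]];
    rewrite ?Rmin_left, ?Rmax_right in * by lra.
  - intros t Ht. apply weighted_deriv; [lra | apply Hd; lra].
  - intros t Ht.
    apply (continuity_pt_mult (fun s => exp (- mu * s)) (fun s => q (clamp A B s))).
    + apply derivable_continuous_pt. exists (- mu * exp (- mu * t)).
      apply is_derive_Reals. auto_derive; [trivial | ring].
    + apply (clamp_continuity A B q (fun t => p t + mu * q t)); [lra | exact Hd].
  - exists c; split; [exact Hc|]. intros s.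
    rewrite !clamp_id in Hmvt by lra.
    assert (Hshift : forall u, exp (mu * (s - u)) = exp (mu * s) * exp (- mu * u))
      by (intros u; rewrite <- exp_plus; f_equal; ring).
    rewrite !Hshift.
    transitivity (exp (mu * s) * (exp (- mu * b) * q b - exp (- mu * a) * q a));
      [ring | rewrite Hmvt; ring].
Qed.

Lemma exp_le_mono u v : u <= v -> exp u <= exp v.
Proof.
  intros [Hlt | ->]; [left; apply exp_increasing; exact Hlt | right; reflexivity].
Qed.

Lemma exp_weight_bound mu y d : Rabs y <= d -> exp (mu * y) <= exp (Rabs mu * d).
Proof.
  intros H. apply exp_le_mono.
  apply Rle_trans with (Rabs (mu * y)); [apply Rle_abs|].
  rewrite Rabs_mult. apply Rmult_le_compat_l; [apply Rabs_pos | exact H].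
Qed.

(* Base point s = c: some value of p is bounded by the values of q at the
   endpoints, divided by the length of the interval. *)
Lemma slope_bound A B q p mu a b : A <= a <= b -> b <= B ->
  (forall t, A <= t <= B -> deriv_in A B q t (p t + mu * q t)) ->
  exists c, a <= c <= b /\
    Rabs (p c) * (b - a) <= exp (Rabs mu * (b - a)) * (Rabs (q a) + Rabs (q b)).
Proof.
  intros Ha Hb Hd.
  destruct (weighted_mvt A B q p mu a b Ha Hb Hd) as [c [Hc Hid]].
  exists c; split; [exact Hc|].
  specialize (Hid c). rewrite Rminus_diag, Rmult_0_r, exp_0, Rmult_1_l in Hid.
  assert (Hpc : Rabs (p c) * (b - a)
                = Rabs (exp (mu * (c - b)) * q b - exp (mu * (c - a)) * q a))
    by (rewrite Hid, Rabs_mult, (Rabs_right (b - a)); lra).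
  rewrite Hpc.
  assert (Wb : exp (mu * (c - b)) <= exp (Rabs mu * (b - a)))
    by (apply exp_weight_bound; unfold Rabs; destruct Rcase_abs; lra).
  assert (Wa : exp (mu * (c - a)) <= exp (Rabs mu * (b - a)))
    by (apply exp_weight_bound; unfold Rabs; destruct Rcase_abs; lra).
  unfold Rminus at 1. eapply Rle_trans; [apply Rabs_triang|].
  rewrite Rabs_Ropp, !Rabs_mult, !(Rabs_right (exp _)) by (left; apply exp_pos).
  assert (exp (mu * (c - b)) * Rabs (q b) <= exp (Rabs mu * (b - a)) * Rabs (q b))
    by (apply Rmult_le_compat_r; [apply Rabs_pos | exact Wb]).
  assert (exp (mu * (c - a)) * Rabs (q a) <= exp (Rabs mu * (b - a)) * Rabs (q a))
    by (apply Rmult_le_compat_r; [apply Rabs_pos | exact Wa]).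
  lra.
Qed.

(* Base point s = a: a bound for q at the right endpoint and for p on the
   interval gives a bound for q at the left endpoint. *)
Lemma transport_bound A B q p mu a b K : A <= a <= b -> b <= B ->
  (forall t, A <= t <= B -> deriv_in A B q t (p t + mu * q t)) ->
  (forall t, a <= t <= b -> Rabs (p t) <= K) ->
  Rabs (q a) <= exp (Rabs mu * (b - a)) * (Rabs (q b) + K * (b - a)).
Proof.
  intros Ha Hb Hd HK.
  destruct (weighted_mvt A B q p mu a b Ha Hb Hd) as [c [Hc Hid]].
  specialize (Hid a). rewrite Rminus_diag, Rmult_0_r, exp_0, Rmult_1_l in Hid.
  replace (q a) with (exp (mu * (a - b)) * q b - exp (mu * (a - c)) * p c * (b - a))
    by lra.
  assert (Wb : exp (mu * (a - b)) <= exp (Rabs mu * (b - a)))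
    by (apply exp_weight_bound; unfold Rabs; destruct Rcase_abs; lra).
  assert (Wc : exp (mu * (a - c)) <= exp (Rabs mu * (b - a)))
    by (apply exp_weight_bound; unfold Rabs; destruct Rcase_abs; lra).
  unfold Rminus at 1. eapply Rle_trans; [apply Rabs_triang|].
  rewrite Rabs_Ropp, !Rabs_mult, !(Rabs_right (exp _)), (Rabs_right (b - a))
    by (apply Rle_ge; first [left; apply exp_pos | lra]).
  rewrite Rmult_plus_distr_l.
  pose proof (Rabs_pos (q b)); pose proof (Rabs_pos (p c)).
  apply Rplus_le_compat; [apply Rmult_le_compat_r; lra|].
  rewrite <- Rmult_assoc. apply Rmult_le_compat_r; [lra|].
  apply Rmult_le_compat; [left; apply exp_pos | lra | exact Wc | apply HK; lra].
Qed.

Lemma real_core A B x d mu nu M0 M2 (q0 q1 q2 : R -> R) :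
  A <= x -> x + d <= B -> 0 < d ->
  (forall t, A <= t <= B -> deriv_in A B q0 t (q1 t + mu * q0 t)) ->
  (forall t, A <= t <= B -> deriv_in A B q1 t (q2 t + nu * q1 t)) ->
  (forall t, x <= t <= x + d -> Rabs (q0 t) <= M0) ->
  (forall t, x <= t <= x + d -> Rabs (q2 t) <= M2) ->
  Rabs (q1 x) <= exp ((Rabs mu + Rabs nu) * d) * (2 * M0 / d + d * M2).
Proof.
  intros Hx Hxd Hd D0 D1 B0 B2.
  destruct (slope_bound A B q0 q1 mu x (x + d)) as [xi [Hxi Hslope]];
    [lra | lra | exact D0 |].
  replace (x + d - x) with d in Hslope by ring.
  set (Em := exp (Rabs mu * d)) in *. set (En := exp (Rabs nu * d)).
  assert (HEm : 1 <= Em).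
  { rewrite <- exp_0. apply exp_le_mono. pose proof (Rabs_pos mu). nra. }
  assert (M2p : 0 <= M2) by (apply Rle_trans with (Rabs (q2 x)); [apply Rabs_pos | apply B2; lra]).
  assert (Hxi_bound : Rabs (q1 xi) <= Em * (2 * M0 / d)).
  { apply Rmult_le_reg_r with d; [lra|].
    replace (Em * (2 * M0 / d) * d) with (Em * (M0 + M0)) by (field; lra).
    eapply Rle_trans; [exact Hslope|]. apply Rmult_le_compat_l; [lra|].
    apply Rplus_le_compat; apply B0; lra. }
  assert (Hback := transport_bound A B q1 q2 nu x xi M2 ltac:(lra) ltac:(lra) D1
                     ltac:(intros t Ht; apply B2; lra)).
  assert (Hw : exp (Rabs nu * (xi - x)) <= En)
    by (apply exp_le_mono; pose proof (Rabs_pos nu); nra).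
  replace (exp ((Rabs mu + Rabs nu) * d) * (2 * M0 / d + d * M2))
    with (En * (Em * (2 * M0 / d + d * M2)))
    by (rewrite Rmult_plus_distr_r, exp_plus; unfold Em, En; ring).
  eapply Rle_trans; [exact Hback|].
  apply Rmult_le_compat; [left; apply exp_pos | | exact Hw |].
  - pose proof (Rabs_pos (q1 xi)); nra.
  - assert (Hd2 : 0 <= d * M2) by nra.
    assert (M2 * (xi - x) <= d * M2) by nra.
    assert (d * M2 <= Em * (d * M2)) by nra.
    rewrite Rmult_plus_distr_l. lra.
Qed.

Lemma cmod_cauchy_schwarz a b u v : Rabs (a * u + b * v) <= cmod a b * cmod u v.
Proof.
  unfold cmod. rewrite <- sqrt_mult_alt by (simpl; nra).
  rewrite <- sqrt_Rsqr_abs. apply sqrt_le_1_alt. unfold Rsqr; simpl.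
  (* Lagrange's identity: the difference is (a v - b u)^2. *)
  pose proof (Rle_0_sqr (a * v - b * u)). unfold Rsqr in *. nra.
Qed.

Lemma cmod_sq a b : cmod a b * cmod a b = a * a + b * b.
Proof. unfold cmod. rewrite sqrt_sqrt by (simpl; nra). simpl; ring. Qed.

(* Complex version: project the three functions onto the direction of
   (q1r x, q1i x) and apply [real_core]. *)
Lemma complex_core A B x d mu nu M0 M2 (q0r q0i q1r q1i q2r q2i : R -> R) :
  A <= x -> x + d <= B -> 0 < d ->
  (forall t, A <= t <= B -> deriv_in A B q0r t (q1r t + mu * q0r t)) ->
  (forall t, A <= t <= B -> deriv_in A B q0i t (q1i t + mu * q0i t)) ->
  (forall t, A <= t <= B -> deriv_in A B q1r t (q2r t + nu * q1r t)) ->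
  (forall t, A <= t <= B -> deriv_in A B q1i t (q2i t + nu * q1i t)) ->
  (forall t, x <= t <= x + d -> cmod (q0r t) (q0i t) <= M0) ->
  (forall t, x <= t <= x + d -> cmod (q2r t) (q2i t) <= M2) ->
  cmod (q1r x) (q1i x) <= exp ((Rabs mu + Rabs nu) * d) * (2 * M0 / d + d * M2).
Proof.
  intros Hx Hxd Hd D0r D0i D1r D1i B0 B2.
  set (a := q1r x); set (b := q1i x); set (r := cmod a b).
  set (C := exp ((Rabs mu + Rabs nu) * d) * (2 * M0 / d + d * M2)).
  set (proj := fun (ur ui : R -> R) (t : R) => a * ur t + b * ui t).
  assert (Dproj : forall ur ui vr vi lam,
    (forall t, A <= t <= B -> deriv_in A B ur t (vr t + lam * ur t)) ->
    (forall t, A <= t <= B -> deriv_in A B ui t (vi t + lam * ui t)) ->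
    forall t, A <= t <= B -> deriv_in A B (proj ur ui) t (proj vr vi t + lam * proj ur ui t)).
  { intros ur ui vr vi lam Hr Hi t Ht.
    replace (proj vr vi t + lam * proj ur ui t)
      with (a * (vr t + lam * ur t) + b * (vi t + lam * ui t)) by (unfold proj; ring).
    apply deriv_in_lin; auto. }
  assert (Bproj : forall ur ui M, (forall t, x <= t <= x + d -> cmod (ur t) (ui t) <= M) ->
    forall t, x <= t <= x + d -> Rabs (proj ur ui t) <= r * M).
  { intros ur ui M HM t Ht. eapply Rle_trans; [apply cmod_cauchy_schwarz|].
    apply Rmult_le_compat_l; [apply sqrt_pos | auto]. }
  assert (Hreal : Rabs (proj q1r q1i x) <= exp ((Rabs mu + Rabs nu) * d) * (2 * (r * M0) / d + d * (r * M2)))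
    by (apply (real_core A B x d mu nu _ _ (proj q0r q0i) (proj q1r q1i) (proj q2r q2i));
        auto).
  (* proj q1 x = r^2, so Hreal reads r^2 <= r C. *)
  assert (Hsq : proj q1r q1i x = r * r) by (unfold proj, r; rewrite cmod_sq; reflexivity).
  assert (Hr : 0 <= r) by apply sqrt_pos.
  assert (HC : 0 <= C).
  { unfold C. apply Rmult_le_pos; [left; apply exp_pos|].
    assert (0 <= M0) by (apply Rle_trans with (cmod (q0r x) (q0i x)); [apply sqrt_pos | apply B0; lra]).
    assert (0 <= M2) by (apply Rle_trans with (cmod (q2r x) (q2i x)); [apply sqrt_pos | apply B2; lra]).
    assert (0 <= 2 * M0 / d) by (apply Rmult_le_pos; [lra | left; apply Rinv_0_lt_compat; lra]).
    nra. }
  rewrite Hsq, Rabs_right in Hreal by nra.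
  replace (exp ((Rabs mu + Rabs nu) * d) * (2 * (r * M0) / d + d * (r * M2)))
    with (r * C) in Hreal by (unfold C; field; lra).
  fold r C. nra.
Qed.

Lemma constant_bound E d M0 M2 : 0 < E -> 0 < d -> 0 <= M0 -> 0 <= M2 ->
  E * (2 * M0 / d + d * M2) <= 2 * Rmax (2 / d) d * E * (M0 + M2).
Proof.
  intros HE Hd HM0 HM2.
  pose proof (Rmax_l (2 / d) d); pose proof (Rmax_r (2 / d) d).
  replace (2 * M0 / d) with ((2 / d) * M0) by (field; lra).
  replace (2 * Rmax (2 / d) d * E * (M0 + M2)) with (E * (2 * (Rmax (2 / d) d * (M0 + M2))))
    by ring.
  apply Rmult_le_compat_l; [lra|].
  assert (0 <= 2 / d) by (apply Rmult_le_pos; [lra | left; apply Rinv_0_lt_compat; lra]).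
  nra.
Qed.

Theorem mainTheorem20 (lam : nat -> R) (gamma delta x0 : R) (fr fi : R -> R) :
  0 < gamma ->
  smooth_on x0 (x0 + gamma) fr -> smooth_on x0 (x0 + gamma) fi ->
  0 < 2 * delta -> 2 * delta < gamma ->
  forall (m : nat) (D0r D0i D1r D1i D2r D2i : R -> R) (M0 M2 : R),
    Dop x0 (x0 + gamma) lam (2 * m) fr D0r ->
    Dop x0 (x0 + gamma) lam (2 * m) fi D0i ->
    Dop x0 (x0 + gamma) lam (2 * m + 1) fr D1r ->
    Dop x0 (x0 + gamma) lam (2 * m + 1) fi D1i ->
    Dop x0 (x0 + gamma) lam (2 * m + 2) fr D2r ->
    Dop x0 (x0 + gamma) lam (2 * m + 2) fi D2i ->
    is_lub (cmod_image x0 (x0 + 2 * delta) D0r D0i) M0 ->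
    is_lub (cmod_image x0 (x0 + 2 * delta) D2r D2i) M2 ->
    forall x : R, x0 <= x <= x0 + delta ->
      cmod (D1r x) (D1i x) <=
        2 * Rmax (2 / delta) delta
          * exp ((Rabs (lam (2 * m)%nat) + Rabs (lam (2 * m + 1)%nat)) * delta)
          * (M0 + M2).
Proof.
  intros Hg _ _ Hd Hdg m D0r D0i D1r D1i D2r D2i M0 M2
         H0r H0i H1r H1i H2r H2i [UB0 _] [UB2 _] x Hx.
  assert (HAB : x0 < x0 + gamma) by lra.
  replace (2 * m + 2)%nat with (2 * m + 1 + 1)%nat in H2r, H2i by lia.
  assert (B0 : forall t, x <= t <= x + delta -> cmod (D0r t) (D0i t) <= M0)
    by (intros t Ht; apply UB0; exists t; split; [lra | reflexivity]).
  assert (B2 : forall t, x <= t <= x + delta -> cmod (D2r t) (D2i t) <= M2)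
    by (intros t Ht; apply UB2; exists t; split; [lra | reflexivity]).
  eapply Rle_trans.
  - apply (complex_core x0 (x0 + gamma) x delta (lam (2 * m)%nat) (lam (2 * m + 1)%nat)
             M0 M2 D0r D0i D1r D1i D2r D2i);
      try lra; try assumption; eapply Dop_deriv_succ; eassumption.
  - apply constant_bound; [apply exp_pos | lra | |].
    + apply Rle_trans with (cmod (D0r x) (D0i x)); [apply sqrt_pos | apply B0; lra].
    + apply Rle_trans with (cmod (D2r x) (D2i x)); [apply sqrt_pos | apply B2; lra].
Qed.
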